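(* Let $k\in\mathbb{N}_0$. (1) If $n=1$, then $\mathtt{m}_{2k}-\mathtt{m}_1^{2k}\in\operatorname{qm}(\emptyset,\emptyset)$. (2) For any $n\in\mathbb{N}$ and $i_1,\dots,i_n\in\mathbb{N}_0$, $\mathtt{m}_{2ki_1,\dots,2ki_n}-\mathtt{m}_{i_1,\dots,i_n}^{2k}\in\operatorname{qm}(\emptyset,\emptyset)$.
   Context: Let $\mathbb{R}[\underline x]=\mathbb{R}[x_1,\dots,x_n]$, $\mathscr{M}=\mathbb{R}[\mathtt{m}_{i_1,\dots,i_n}\colon (i_1,\dots,i_n)\in\mathbb{N}_0^n]$ the polynomial ring in countably many indeterminates with $\mathtt{m}_{0,\dots,0}:=1$ (for $n=1$ these are $\mathtt{m}_i$, $i\in\mathbb{N}_0$), $\mathscr{M}[\underline x]=\mathscr{M}\otimes_{\mathbb{R}}\mathbb{R}[\underline x]$, and $\mathtt{m}:\mathscr{M}[\underline x]\to\mathscr{M}$ the unique $\mathscr{M}$-linear map with $\mathtt{m}(x_1^{i_1}\cdots x_n^{i_n})=\mathtt{m}_{i_1,\dots,i_n}$. $\operatorname{qm}(\emptyset,\emptyset)$ is the quadratic module of $\mathscr{M}$ generated by $\{\mathtt{m}(f^2)\colon f\in\mathscr{M}[\underline x]\}$, i.e. the smallest subset of $\mathscr{M}$ containing $1$ and these elements and closed under addition and under multiplication by squares of elements of $\mathscr{M}$. *)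

From HB Require Import structures.
From mathcomp Require Import all_boot all_order all_algebra.
From mathcomp Require Import finmap.
From mathcomp.multinomials Require Import monalg.

Set Implicit Arguments.
Unset Strict Implicit.
Unset Printing Implicit Defensive.

Import Order.TTheory GRing.Theory Num.Theory.
Local Open Scope ring_scope.

Definition midx (n : nat) := {ffun 'I_n -> nat}.

(* The nonzero multi-indices: they index the indeterminates of the moment ring
   (m_{0,...,0} is not an indeterminate, it is set equal to 1). *)
Definition nzidx (n : nat) := {a : midx n | a != [ffun => 0%N]}.

(* The moment ring  M = R[ m_a : a in N_0^n \ {0} ]  (countably many indeterminates). *)
Definition Mring (R : realFieldType) (n : nat) := {malg R[cmonom (nzidx n)]}.

Definition mvar (R : realFieldType) (n : nat) (a : midx n) : Mring R n :=
  match insub a with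
  | Some b => << ucm b >>
  | None => 1
  end.

Definition Mx (R : realFieldType) (n : nat) := {malg (Mring R n)[cmonom 'I_n]}.

Definition expo (n : nat) (a : cmonom 'I_n) : midx n := [ffun i => a i].

Definition mmap (R : realFieldType) (n : nat) (f : Mx R n) : Mring R n :=
  \sum_(a <- msupp f) f@_a * mvar R (expo a).

Inductive qm0 (R : realFieldType) (n : nat) : Mring R n -> Prop :=
| qm0_one : qm0 1
| qm0_gen (f : Mx R n) : qm0 (mmap (f * f))
| qm0_add (a b : Mring R n) : qm0 a -> qm0 b -> qm0 (a + b)
| qm0_sqmul (s a : Mring R n) : qm0 a -> qm0 (s * s * a).

Definition m1 (R : realFieldType) (i : nat) : Mring R 1 := mvar R [ffun => i].

From Pilot Require Import Defs.
From HB Require Import structures.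
From mathcomp Require Import all_boot all_order all_algebra.
From mathcomp Require Import finmap.
From mathcomp.multinomials Require Import monalg.
From mathcomp Require Import ring.
Set Implicit Arguments.
Unset Strict Implicit.
Unset Printing Implicit Defensive.
Import GRing.Theory.
Local Open Scope ring_scope.

(* For t, s in a commutative ring, the remainder t^(2k) - s^(2k) - 2k s^(2k-1) (t - s)
   of the tangent line of t |-> t^(2k) at s is an explicit sum of squares.  Take
   t = x^i in M[x] and s the constant m_i: the M-linear map m sends sums of squares
   into qm(0,0), kills the tangent term because m(x^i - m_i) = 0, and sends t^(2k)
   to m_(2k i). *)

Section SumsOfSquares.
Variable T : comNzRingType.

Inductive sos : T -> Prop :=
| sos_sq (f : T) : sos (f * f)
| sos_add (p q : T) : sos p -> sos q -> sos (p + q).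

Lemma sos0 : sos 0.
Proof. by rewrite -(mulr0 0); apply: sos_sq. Qed.

Lemma sos_mulsq (g p : T) : sos p -> sos (g * g * p).
Proof.
elim=> [f|p1 q1 _ IH1 _ IH2]; last by rewrite mulrDr; apply: sos_add.
by rewrite (_ : _ * _ = (g * f) * (g * f)); [apply: sos_sq | ring].
Qed.

Lemma sos_muln (p : T) m : sos p -> sos (p *+ m).
Proof.
move=> sos_p; elim: m => [|m IH]; first by rewrite mulr0n; apply: sos0.
by rewrite mulrS; apply: sos_add.
Qed.

(* tangent_quot u v K = sum_(j < K) (j+1) v^j u^(K-1-j), the quotient of
   u^(K+1) - v^(K+1) - (K+1) v^K (u - v) by (u - v)^2. *)
Fixpoint tangent_quot (u v : T) (K : nat) : T :=
  if K is K'.+1 then u * tangent_quot u v K' + K'.+1%:R * v ^+ K' else 0.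

Lemma exprS_sub_tangent (u v : T) K :
  u ^+ K.+1 - v ^+ K.+1 - K.+1%:R * v ^+ K * (u - v)
  = (u - v) * (u - v) * tangent_quot u v K.
Proof.
elim: K => [|K IH] /=; first by rewrite !expr0 mulr0; ring.
have -> : (u - v) * (u - v) * (u * tangent_quot u v K + K.+1%:R * v ^+ K)
  = u * ((u - v) * (u - v) * tangent_quot u v K) + K.+1%:R * v ^+ K * (u - v) * (u - v)
  by ring.
by rewrite -IH !exprS; ring.
Qed.

Lemma sos_tangent_quot (t s : T) K : sos (tangent_quot (t * t) (s * s) K).
Proof.
elim: K => [|K IH] /=; first exact: sos0.
apply: sos_add; first exact: sos_mulsq.
by rewrite exprMn mulr_natl; apply/sos_muln/sos_sq.
Qed.

Lemma sos_expr_even_sub_tangent (t s : T) k :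
  sos (t ^+ (2 * k) - s ^+ (2 * k) - (2 * k)%:R * s ^+ (2 * k).-1 * (t - s)).
Proof.
case: k => [|K]; first by rewrite muln0 mulr0n !mul0r subr0 subrr; apply: sos0.
have -> : (2 * K.+1).-1 = (2 * K).+1 by rewrite mulnS.
rewrite exprSr !exprM !expr2.
have -> : (t * t) ^+ K.+1 - (s * s) ^+ K.+1 - (2 * K.+1)%:R * ((s * s) ^+ K * s) * (t - s)
  = ((t * t) ^+ K.+1 - (s * s) ^+ K.+1 - K.+1%:R * (s * s) ^+ K * (t * t - s * s))
    + (s * s) ^+ K * ((t - s) * (t - s)) *+ K.+1.
  by ring.
rewrite exprS_sub_tangent; apply: sos_add; first exact/sos_mulsq/sos_tangent_quot.
have -> : (s * s) ^+ K * ((t - s) * (t - s)) = s ^+ K * (t - s) * (s ^+ K * (t - s)).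
  by rewrite exprMn; ring.
exact/sos_muln/sos_sq.
Qed.
End SumsOfSquares.

Definition cm_midx n (a : midx n) : cmonom 'I_n :=
  [cmonom a j | j in [fset j | j : 'I_n]%fset]%M.

Lemma cm_midxE n (a : midx n) (j : 'I_n) : cm_midx a j = a j.
Proof. by rewrite /cm_midx cmE fsfun_fun in_fsetE /=. Qed.

HB.instance Definition _ (R : realFieldType) (n : nat) :=
  GRing.isAdditive.Build (Mx R n) (Mring R n) (@Defs.mmap R n)
    (@mmap_is_additive _ _ _ idfun (fun a => mvar R (expo a))).

Section Moments.
Variables (R : realFieldType) (n : nat).

Lemma mmap_malgE (f : Mx R n) :
  Defs.mmap f = monalg.mmap idfun (fun a => mvar R (expo a)) f.
Proof. by []. Qed.

Lemma mmap_add (f g : Mx R n) : Defs.mmap (f + g) = Defs.mmap f + Defs.mmap g.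
Proof. exact: raddfD. Qed.

Lemma mmap_sub (f g : Mx R n) : Defs.mmap (f - g) = Defs.mmap f - Defs.mmap g.
Proof. exact: raddfB. Qed.

Lemma mvar0 : mvar R [ffun => 0%N] = 1 :> Mring R n.
Proof. by rewrite /mvar insubF // eqxx. Qed.

Lemma mmapC (c : Mring R n) : Defs.mmap (c%:MP : Mx R n) = c.
Proof.
rewrite mmap_malgE mmapU /=.
have -> : expo (mone : cmonom 'I_n) = [ffun => 0%N] by apply/ffunP => j; rewrite !ffunE cm1.
by rewrite mvar0 mulr1.
Qed.

Lemma mmapCM (c : Mring R n) (f : Mx R n) : Defs.mmap (c%:MP * f) = c * Defs.mmap f.
Proof.
rewrite !mmap_malgE mul_malgC (mmapEw (msuppZ_le _ _)) mmapE big_distrr /=.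
by apply: eq_bigr => a _; rewrite mcoeffZ mulrA.
Qed.

Definition xmonom (a : midx n) : Mx R n := << cm_midx a >>.

Lemma xmonomM a b : xmonom a * xmonom b = xmonom [ffun j => (a j + b j)%N].
Proof.
rewrite /xmonom malgM_def fgmulUU (mulr1 (1 : Mring R n)).
set m := mmul _ _; suff -> : m = cm_midx [ffun j => (a j + b j)%N] by [].
by apply/eqP/cmP => j; rewrite cmM !cm_midxE ffunE.
Qed.

Lemma xmonom0 : xmonom [ffun => 0%N] = 1.
Proof.
rewrite /xmonom -mpolyC1E; set m := cm_midx _; suff -> : m = mone by [].
by apply/eqP/cmP => j; rewrite cm1 cm_midxE ffunE.
Qed.

Lemma xmonomX a p : xmonom a ^+ p = xmonom [ffun j => (p * a j)%N].
Proof.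
elim: p => [|p IH].
  by rewrite expr0 -xmonom0; congr xmonom; apply/ffunP => j; rewrite !ffunE.
by rewrite exprS IH xmonomM; congr xmonom; apply/ffunP => j; rewrite !ffunE mulSn.
Qed.

Lemma mmap_xmonom a : Defs.mmap (xmonom a) = mvar R a.
Proof.
rewrite mmap_malgE mmapU mul1r; congr mvar.
by apply/ffunP => j; rewrite ffunE cm_midxE.
Qed.

Lemma qm0_mmap_sos (p : Mx R n) : sos p -> qm0 (Defs.mmap p).
Proof.
elim=> [f|p1 p2 _ IH1 _ IH2]; first exact: qm0_gen.
by rewrite mmap_add; apply: qm0_add.
Qed.

Lemma mmapCM_center (c : Mring R n) (y : Mx R n) :
  Defs.mmap (c%:MP * (y - (Defs.mmap y)%:MP)) = 0.
Proof. by rewrite mmapCM mmap_sub mmapC subrr mulr0. Qed.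

Lemma qm0_mmap_expr_even (y : Mx R n) k :
  qm0 (Defs.mmap (y ^+ (2 * k)) - Defs.mmap y ^+ (2 * k)).
Proof.
have := qm0_mmap_sos (sos_expr_even_sub_tangent y (Defs.mmap y)%:MP k).
rewrite -!(rmorphXn (@malgC (cmonom 'I_n) (Mring R n))) -mpolyC_nat -rmorphM.
by rewrite !mmap_sub mmapCM_center subr0 mmapC.
Qed.

Lemma qm0_mvar_expr_even (a : midx n) k :
  qm0 (mvar R [ffun j => (2 * k * a j)%N] - mvar R a ^+ (2 * k)).
Proof. by rewrite -mmap_xmonom -xmonomX -mmap_xmonom; apply: qm0_mmap_expr_even. Qed.
End Moments.

Theorem lemma2p2 (R : realFieldType) (k : nat) :
  qm0 (m1 R (2 * k) - m1 R 1 ^+ (2 * k))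
  /\ (forall (n : nat) (i : midx n), (0 < n)%N ->
        qm0 (mvar R [ffun j => (2 * k * i j)%N] - mvar R i ^+ (2 * k))).
Proof.
split=> [|n i _]; last exact: qm0_mvar_expr_even.
rewrite /m1 (_ : [ffun=> (2 * k)%N] = [ffun j => (2 * k * [ffun=> 1%N] j)%N]).
  exact: qm0_mvar_expr_even.
by apply/ffunP => j; rewrite !ffunE muln1.
Qed.
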